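(* Let $c_1,c_2,c_3\in\mathbb{C}$ with $|c_i|>1$, let $r_i=\sqrt{|c_i|^2-1}$, and let $L_i=\{z\in\mathbb{D}:|z-c_i|=r_i\}$, where $\mathbb{D}=\{z\in\mathbb{C}:|z|<1\}$. Assume that $L_1,L_2,L_3$ together with the point $z_0=0$ satisfy the configuration condition in the context. Define $\tau_i\colon S^1\to S^1$ by $\tau_i(z)=\dfrac{r_i^2}{\bar z-\bar c_i}+c_i$ if $|z-c_i|>r_i$ and $\tau_i(z)=z$ otherwise. Then there exists a real constant $C<1$, depending only on $L_1,L_2,L_3$, such that for all $x,y\in S^1$ there exists $i\in\{1,2,3\}$ with $|\tau_i(x)-\tau_i(y)|<C|x-y|$.
   Context: $\mathbb{D}$ is the Poincaré disk model of the hyperbolic plane with boundary $S^1=\{|z|=1\}$; hyperbolic lines not through $0$ are the arcs $\{z\in\mathbb{D}:|z-c|^2=|c|^2-1\}$ with $|c|>1$, and lines through $0$ are diameters. Configuration condition: for all distinct $i,i'\in\{1,2,3\}$, either (a) $L_i\cap L_{i'}=\emptyset$ and $z_0$ lies in the connected component of $\mathbb{D}\setminus(L_i\cup L_{i'})$ whose boundary contains both lines, or (b) $L_i,L_{i'}$ meet at an angle of measure $\pi/m$ for some integer $m\ge2$, and $z_0$ lies in the interior of that angle. *)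

From HB Require Import structures.
From mathcomp Require Import all_boot all_order all_algebra.
From mathcomp Require Import all_classical all_reals.
From mathcomp Require Import all_analysis.
From mathcomp Require Import complex.
Set Implicit Arguments. Unset Strict Implicit. Unset Printing Implicit Defensive.
Import Order.TTheory GRing.Theory Num.Theory.
Import numFieldTopology.Exports numFieldNormedType.Exports.
Local Open Scope ring_scope.
Local Open Scope classical_set_scope.

Section Hyp.
Variable R : realType.
Local Notation C := R[i].

Definition cmod (z : C) : R := Num.sqrt (complex.Re z ^+ 2 + complex.Im z ^+ 2).

Definition cconj (z : C) : C := (complex.Re z +i* (- complex.Im z))%C.

Definition cdot (z w : C) : R := complex.Re z * complex.Re w + complex.Im z * complex.Im w.

Definition disk : set C := [set z | cmod z < 1].
Definition S1 : set C := [set z | cmod z = 1].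

(* radius r = sqrt(|c|^2 - 1) of the circle orthogonal to S^1 centered at c *)
Definition rad (c : C) : R := Num.sqrt (cmod c ^+ 2 - 1).

Definition hline (c : C) : set C := [set z | cmod z < 1 /\ cmod (z - c) = rad c].

Definition tau (c : C) (z : C) : C :=
  if rad c < cmod (z - c) then (rad c ^+ 2)%:C%C / (cconj z - cconj c) + c else z.

Definition ofR2 (p : R * R) : C := (p.1 +i* p.2)%C.
Definition inR2 (A : set C) : set (R * R) := [set p | A (ofR2 p)].
Definition toR2 (z : C) : R * R := (complex.Re z, complex.Im z).

Definition frontier (A : set (R * R)) : set (R * R) := closure A `\` interior A.

Definition vangle (u v : C) : R := acos (cdot u v / (cmod u * cmod v)).

(* angle at the intersection point p of the lines L_c and L_c' of the sector
   (complementary region near p) containing z0: near p, the side of L_c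
   containing z0 is the half-plane {v | s * ((v - p) . (p - c)) > 0}, where
   s = +1 if z0 is outside the disk |z - c| < r and s = -1 otherwise;
   the intersection of two half-planes with inner normals u, u' has opening
   angle pi - angle(u, u'). *)
Definition side (c z0 : C) : R := if rad c < cmod (z0 - c) then 1 else -1.
Definition sector_angle (c c' z0 p : C) : R :=
  pi - vangle ((side c z0)%:C%C * (p - c)) ((side c' z0)%:C%C * (p - c')).

Definition pair_config (c c' z0 : C) : Prop :=
  (hline c `&` hline c' = set0 /\
     let U := connected_component (inR2 (disk `\` (hline c `|` hline c'))) (toR2 z0) in
     inR2 (hline c) `<=` frontier U /\ inR2 (hline c') `<=` frontier U)
  \/
  (exists p, hline c p /\ hline c' p /\
     exists m : nat, (2 <= m)%N /\ sector_angle c c' z0 p = pi / m%:R).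

Definition config (c : 'I_3 -> C) (z0 : C) : Prop :=
  forall i i' : 'I_3, i != i' -> pair_config (c i) (c i') z0.

End Hyp.

(* Write [P_c(z) = |z|^2 - 2 z.c + 1] for the power of [z] with respect to the
   circle of centre [c] orthogonal to S^1, so that [L_c] is [{|z| < 1, P_c(z) = 0}].

   Every pair of lines of the configuration satisfies [c.c' <= 1].  At a crossing
   point [p] one has [(p - c).(p - c') = c.c' - 1], and an angle [pi/m <= pi/2]
   containing 0 forces this to be [<= 0].  For disjoint lines bounding the
   component of 0, each line lies outside the other circle ([P_c' >= 0] on [L_c]);
   if [c.c' > 1], either the point of [L_c] on the ray through [c] lies inside the
   circle of [c'] (or vice versa), or the foot [u] of the radical axis on the
   segment [c c'] has [|u| > 1] and the ray through [u] meets both lines.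

   For [x] on S^1, [|x - c|^2 = r^2 + 2 (1 - x.c)], and [tau_c] multiplies
   distances from [x] by at most [r / |x - c|].  Among three centres, two lie on
   the same side of the diameter through [x]; two such centres with [c.c' <= 1]
   cannot both have [x.c > 1 - d] once [d] is small compared with the radii, so
   some [tau_i] contracts at [x] by a factor depending only on the radii. *)

From Pilot Require Import Defs.
From HB Require Import structures.
From mathcomp Require Import all_boot all_order all_algebra.
From mathcomp Require Import all_classical all_reals.
From mathcomp Require Import all_analysis.
From mathcomp Require Import complex.
From mathcomp Require Import ring lra.
Import Order.TTheory GRing.Theory Num.Theory.
Import numFieldTopology.Exports numFieldNormedType.Exports.
Local Open Scope ring_scope.
Local Open Scope classical_set_scope.
Set Implicit Arguments.
Unset Strict Implicit.
Unset Printing Implicit Defensive.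

Local Notation Re := complex.Re.
Local Notation Im := complex.Im.
Local Notation rad := Defs.rad.

Section RealInequalities.
Variable R : realFieldType.
Implicit Types (a b p q s t d u v : R).

Lemma two_of_three_same_sign a b s : [\/ 0 <= a * b, 0 <= a * s | 0 <= b * s].
Proof.
have [ab|ab] := lerP 0 (a * b); first by constructor 1.
have [as_|as_] := lerP 0 (a * s); first by constructor 2.
by constructor 3; have := sqr_ge0 a; nra.
Qed.

Lemma near_one_ub u v d : 0 < d -> 2 * d <= 1 ->
  1 - d < u -> 1 - d < v -> u * v <= 1 -> u <= 1 + 2 * d.
Proof.
move=> d_gt0 d_le u_gt v_gt uv_le; rewrite leNgt; apply/negP => u_gt'.
have : (1 + 2 * d) * (1 - d) < u * v by apply: ltr_pM; lra.
have : 0 <= d * (1 - 2 * d) by apply: mulr_ge0; lra.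
lra.
Qed.

Lemma near_one_sqr_ub u d : 0 < d -> 4 * d <= 1 -> 0 < u -> u <= 1 + 2 * d -> u ^+ 2 - 1 <= 5 * d.
Proof.
move=> d_gt0 d_le u_gt0 u_le.
have : u ^+ 2 <= (1 + 2 * d) ^+ 2 by rewrite ler_pXn2r ?nnegrE //; lra.
have : 0 <= d * (1 - 4 * d) by apply: mulr_ge0; lra.
lra.
Qed.

Lemma near_one_sqrB_ub u v d : 1 - d < u -> u <= 1 + 2 * d -> 1 - d < v -> v <= 1 + 2 * d ->
  (u - v) ^+ 2 <= 9 * d ^+ 2.
Proof.
move=> *; rewrite -subr_ge0.
have -> : 9 * d ^+ 2 - (u - v) ^+ 2 = (3 * d - (u - v)) * (3 * d + (u - v)) by ring.
by rewrite mulr_ge0 //; lra.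
Qed.

(* Expansion of [(p q)^2 <= (1 - a b)^2], where [s] and [t] measure by how much
   the vectors [(a, p)] and [(b, q)] leave the unit circle. *)
Lemma excess_mul_le a b p q s t :
  a ^+ 2 + p ^+ 2 = 1 + s -> b ^+ 2 + q ^+ 2 = 1 + t -> a * b + p * q <= 1 -> 0 <= p * q ->
  s * t <= (a - b) ^+ 2 + s * (b ^+ 2 - 1) + t * (a ^+ 2 - 1).
Proof.
move=> ap bq abpq pq_ge0.
have pq_le : p * q <= 1 - a * b by rewrite -(lerD2l (a * b)) subrKC.
have pq2 : (p * q) ^+ 2 <= (1 - a * b) ^+ 2.
  by rewrite ler_pXn2r ?nnegrE // (le_trans pq_ge0).
have pE : p ^+ 2 = 1 + s - a ^+ 2 by rewrite -ap addrAC subrr add0r.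
have qE : q ^+ 2 = 1 + t - b ^+ 2 by rewrite -bq addrAC subrr add0r.
rewrite exprMn pE qE -subr_ge0 in pq2; rewrite -subr_ge0.
suff <- : (1 - a * b) ^+ 2 - (1 + s - a ^+ 2) * (1 + t - b ^+ 2)
  = (a - b) ^+ 2 + s * (b ^+ 2 - 1) + t * (a ^+ 2 - 1) - s * t by [].
by ring.
Qed.

(* With [a, b] in [(1 - d, 1 + 2 d]], [excess_mul_le] gives
   [s t <= 9 d^2 + 5 d (s + t)], which [16 d <= s, t] rules out. *)
Lemma near_one_pair a b p q s t d :
  0 < d -> 16 * d <= 1 -> 16 * d <= s -> 16 * d <= t ->
  a ^+ 2 + p ^+ 2 = 1 + s -> b ^+ 2 + q ^+ 2 = 1 + t -> a * b + p * q <= 1 -> 0 <= p * q ->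
  a <= 1 - d \/ b <= 1 - d.
Proof.
move=> d_gt0 d_le s_ge t_ge ap bq abpq pq_ge0.
have [|a_gt] := lerP a (1 - d); first by left.
have [|b_gt] := lerP b (1 - d); first by right.
exfalso.
have ab_le1 : a * b <= 1 by apply: le_trans abpq; rewrite lerDl.
have d_le2 : 4 * d <= 1 by lra.
have a_le : a <= 1 + 2 * d by apply: near_one_ub b_gt ab_le1 => //; lra.
have b_le : b <= 1 + 2 * d by apply: near_one_ub a_gt _ => //; [lra | rewrite mulrC].
have ab2 := near_one_sqrB_ub a_gt a_le b_gt b_le.
have d_lt1 : 0 < 1 - d by lra.
have a2 := near_one_sqr_ub d_gt0 d_le2 (lt_trans d_lt1 a_gt) a_le.
have b2 := near_one_sqr_ub d_gt0 d_le2 (lt_trans d_lt1 b_gt) b_le.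
have st := excess_mul_le ap bq abpq pq_ge0.
have st_gt0 : 0 < s * t by apply: mulr_gt0; lra.
have sb : s * (b ^+ 2 - 1) <= 5 / 16 * (s * t).
  apply: (le_trans (ler_wpM2l _ b2)); first lra.
  have : s * (16 * d) <= s * t by rewrite ler_wpM2l //; lra.
  lra.
have ta : t * (a ^+ 2 - 1) <= 5 / 16 * (s * t).
  apply: (le_trans (ler_wpM2l _ a2)); first lra.
  have : t * (16 * d) <= t * s by rewrite ler_wpM2l //; lra.
  rewrite [t * s]mulrC; lra.
have dst : 9 * d ^+ 2 <= 9 / 256 * (s * t).
  have : (16 * d) * (16 * d) <= s * t by apply: ler_pM; lra.
  rewrite expr2; lra.
move: st ab2 sb ta dst st_gt0; clear; lra.
Qed.

Lemma sqr_contraction_lt a b q : 0 <= a -> 0 < b -> q < 1 ->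
  a ^+ 2 <= q * b ^+ 2 -> a < (1 + q) / 2 * b.
Proof.
move=> a_ge0 b_gt0 q_lt1 ab.
have q_ge0 : 0 <= q by rewrite -(pmulr_lge0 _ (exprn_gt0 2 b_gt0)) (le_trans _ ab) ?sqr_ge0.
have qK : q < ((1 + q) / 2) ^+ 2.
  by rewrite -subr_gt0 (_ : _ - q = ((1 - q) / 2) ^+ 2); [rewrite exprn_gt0 //; lra | field].
have Kb_ge0 : 0 <= (1 + q) / 2 * b by rewrite mulr_ge0 ?ltW //; lra.
rewrite -(ltr_pXn2r (_ : (0 < 2)%N)) ?nnegrE //.
by rewrite exprMn (le_lt_trans ab) // ltr_pM2r ?exprn_gt0.
Qed.

End RealInequalities.

Section PlaneGeometry.
Variable R : realType.
Implicit Types (d k m : R) (c e u w x y z : R[i]).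

Lemma cmod_ge0 z : 0 <= cmod z.
Proof. exact: sqrtr_ge0. Qed.

Lemma cmod_sqr z : cmod z ^+ 2 = cdot z z.
Proof. by rewrite /cmod sqr_sqrtr ?addr_ge0 ?sqr_ge0 // /cdot !expr2. Qed.

Lemma cdotC z w : cdot z w = cdot w z.
Proof. by rewrite /cdot mulrC [Im z * _]mulrC. Qed.

Lemma cdotDr z u w : cdot z (u + w) = cdot z u + cdot z w.
Proof. by case: z u w => [? ?] [? ?] [? ?]; rewrite /cdot /=; ring. Qed.

Lemma cdotBr z u w : cdot z (u - w) = cdot z u - cdot z w.
Proof. by case: z u w => [? ?] [? ?] [? ?]; rewrite /cdot /=; ring. Qed.

Lemma cdot_scaler z u k : cdot z (k%:C%C * u) = k * cdot z u.
Proof. by case: z u => [? ?] [? ?]; rewrite /cdot /=; ring. Qed.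

Lemma cdot_scalel z u k : cdot (k%:C%C * z) u = k * cdot z u.
Proof. by rewrite cdotC cdot_scaler cdotC. Qed.

Lemma cmodB_sqr z w : cmod (z - w) ^+ 2 = cdot z z - 2 * cdot z w + cdot w w.
Proof. by rewrite cmod_sqr; case: z w => [? ?] [? ?]; rewrite /cdot /=; ring. Qed.

Lemma cdot_ge0 z : 0 <= cdot z z.
Proof. by rewrite -cmod_sqr sqr_ge0. Qed.

Lemma cmod_gt0 z : z != 0 -> 0 < cmod z.
Proof.
case: z => a b nz; rewrite lt_def cmod_ge0 andbT; apply: contraNneq nz.
move/(congr1 (fun r => r ^+ 2)); rewrite cmod_sqr expr0n /cdot /= => ab0.
by rewrite eq_complex /=; apply/andP; split; apply/eqP; nra.
Qed.

Lemma cdot_le_cmod z w : cdot z w <= cmod z * cmod w.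
Proof.
have [zw0|zw_gt0] := lerP (cdot z w) 0.
  by apply: le_trans zw0 _; rewrite mulr_ge0 ?cmod_ge0.
have lagrange : cdot z w ^+ 2 <= (cmod z * cmod w) ^+ 2.
  rewrite exprMn !cmod_sqr; case: z w {zw_gt0} => [a b] [a' b']; rewrite /cdot /=.
  have -> : (a * a + b * b) * (a' * a' + b' * b')
    = (a * a' + b * b') ^+ 2 + (a * b' - b * a') ^+ 2 by ring.
  by rewrite lerDl sqr_ge0.
by move: lagrange; rewrite ler_pXn2r // nnegrE ?(ltW zw_gt0) ?mulr_ge0 ?cmod_ge0.
Qed.

Lemma cmod_lt1 z : (cmod z < 1) = (cdot z z < 1).
Proof. by rewrite -cmod_sqr -(ltr_pXn2r (_ : (0 < 2)%N)) ?nnegrE ?cmod_ge0 // expr1n. Qed.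

Lemma S1_cdot x : S1 x -> cdot x x = 1.
Proof. by rewrite /S1 /= -cmod_sqr => ->; rewrite expr1n. Qed.

(* The power [|z - c|^2 - r^2] of [z] with respect to the circle of centre [c]
   orthogonal to S^1 (see [cmodB_rad]). *)
Definition power c z : R := cdot z z - 2 * cdot z c + 1.

Lemma power0 c : power c 0 = 1.
Proof. by rewrite /power /cdot /=; ring. Qed.

Lemma power_sub c c' z : power c' z = power c z + 2 * (cdot z c - cdot z c').
Proof. by rewrite /power; ring. Qed.

Lemma rad_sqr c : 1 <= cmod c -> rad c ^+ 2 = cdot c c - 1.
Proof. by move=> c1; rewrite sqr_sqrtr ?subr_ge0 ?exprn_ege1 // cmod_sqr. Qed.

Lemma cmodB_rad c z : 1 <= cmod c -> cmod (z - c) ^+ 2 = rad c ^+ 2 + power c z.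
Proof. by move=> c1; rewrite cmodB_sqr rad_sqr // /power cdotC; ring. Qed.

Lemma rad_lt_cmodB c z : 1 <= cmod c -> (rad c < cmod (z - c)) = (0 < power c z).
Proof.
move=> c1; rewrite -(ltr_pXn2r (_ : (0 < 2)%N)) ?nnegrE ?sqrtr_ge0 ?cmod_ge0 //.
by rewrite cmodB_rad // ltrDl.
Qed.

Lemma hlineP c z : 1 <= cmod c -> hline c z <-> cdot z z < 1 /\ power c z = 0.
Proof.
move=> c1; rewrite /hline /= cmod_lt1; split=> -[z1 zc]; split=> //.
  by move: (congr1 (fun r => r ^+ 2) zc); rewrite cmodB_rad // -[RHS]addr0 => /addrI.
by apply/eqP; rewrite -(eqrXn2 (_ : (0 < 2)%N)) ?cmod_ge0 ?sqrtr_ge0 // cmodB_rad // zc addr0.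
Qed.

Lemma power_S1 c x : S1 x -> power c x = 2 * (1 - cdot x c).
Proof. by move=> /S1_cdot xx; rewrite /power xx; ring. Qed.

Lemma tau_subr c x : rad c < cmod (x - c) ->
  tau c x - c = (rad c ^+ 2 / cmod (x - c) ^+ 2)%:C%C * (x - c).
Proof.
move=> xout; rewrite /tau xout addrK cmod_sqr.
case: x c {xout} => [a b] [a' b']; rewrite /cdot /cconj /=.
apply/eqP; rewrite eq_complex /=.
have -> : - b - - b' = - (b - b') by ring.
by rewrite sqrrN -!expr2; apply/andP; split; apply/eqP; ring.
Qed.

Lemma cmod_scaleB_sqr k m u w :
  cmod (k%:C%C * u - m%:C%C * w) ^+ 2
  = k * m * cmod (u - w) ^+ 2 + (k - m) * (k * cmod u ^+ 2 - m * cmod w ^+ 2).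
Proof. by rewrite !cmod_sqr; case: u w => [? ?] [? ?]; rewrite /cdot /=; ring. Qed.

(* On the inversion side, [tau] scales [x - c] by [k = r^2/|x - c|^2], on the
   other side by [1]; both cases reduce to the identity [cmod_scaleB_sqr]. *)
Lemma tau_contract c x y : 1 <= cmod c -> rad c < cmod (x - c) ->
  cmod (tau c x - tau c y) ^+ 2 <= rad c ^+ 2 / cmod (x - c) ^+ 2 * cmod (x - y) ^+ 2.
Proof.
move=> c1 xout.
have xc_gt0 : 0 < cmod (x - c) ^+ 2 by rewrite exprn_gt0 // (le_lt_trans (sqrtr_ge0 _) xout).
set k := rad c ^+ 2 / _.
have kE : k * cmod (x - c) ^+ 2 = rad c ^+ 2 by rewrite mulfVK ?gt_eqF.
have k_ge0 : 0 <= k by rewrite divr_ge0 ?sqr_ge0 ?ltW.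
have k_lt1 : k < 1.
  by rewrite ltr_pdivrMr // mul1r ltr_pXn2r ?nnegrE ?sqrtr_ge0 ?cmod_ge0.
have tauB : tau c x - tau c y = (tau c x - c) - (tau c y - c) by rewrite opprB addrA subrK.
have xyE : x - y = (x - c) - (y - c) by rewrite opprB addrA subrK.
have xy_ge0 := sqr_ge0 (cmod (x - y)).
rewrite tauB tau_subr // -/k.
have [yout|yin] := boolP (rad c < cmod (y - c)).
  have yc_gt0 : 0 < cmod (y - c) ^+ 2.
    by rewrite exprn_gt0 // (le_lt_trans (sqrtr_ge0 _) yout).
  rewrite tau_subr //; set m := rad c ^+ 2 / _.
  have mE : m * cmod (y - c) ^+ 2 = rad c ^+ 2 by rewrite mulfVK ?gt_eqF.
  have m_lt1 : m < 1.
    by rewrite ltr_pdivrMr // mul1r ltr_pXn2r ?nnegrE ?sqrtr_ge0 ?cmod_ge0.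
  rewrite cmod_scaleB_sqr kE mE subrr mulr0 addr0 -xyE.
  by rewrite -mulrA ler_wpM2l // ler_piMl // ltW.
have yc_le : cmod (y - c) ^+ 2 <= rad c ^+ 2.
  by rewrite ler_pXn2r ?nnegrE ?sqrtr_ge0 ?cmod_ge0 // leNgt.
rewrite /tau (negbTE yin) -[y - c]mul1r -[1 : R[i]]/(1%:C%C).
rewrite cmod_scaleB_sqr kE mulr1 mul1r -xyE gerDl.
by rewrite mulr_le0_ge0 // ?subr_le0 ?subr_ge0 // ltW.
Qed.

Lemma tau_contract_S1 c x y d : 1 < cmod c -> S1 x -> 0 < d -> cdot x c <= 1 - d ->
  cmod (tau c x - tau c y) ^+ 2
  <= (cdot c c - 1) / (cdot c c - 1 + 2 * d) * cmod (x - y) ^+ 2.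
Proof.
move=> /ltW c1 Sx d_gt0 xc_le.
have r_ge0 : 0 <= cdot c c - 1 by rewrite -rad_sqr ?sqr_ge0.
have xcE : cmod (x - c) ^+ 2 = cdot c c - 1 + 2 * (1 - cdot x c).
  by rewrite cmodB_rad // rad_sqr // power_S1.
have xout : rad c < cmod (x - c) by rewrite rad_lt_cmodB // power_S1 //; lra.
apply: (le_trans (tau_contract y c1 xout)); rewrite ler_wpM2r ?sqr_ge0 //.
rewrite rad_sqr // xcE ler_pdivrMr; last lra.
rewrite mulrAC ler_pdivlMr; last lra.
by rewrite ler_wpM2l //; lra.
Qed.

Definition ccross z w : R := Re z * Im w - Im z * Re w.

Lemma cdot_ccross_sqr x c : cdot x x = 1 -> cdot x c ^+ 2 + ccross x c ^+ 2 = cdot c c.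
Proof.
move=> xx; rewrite -[RHS]mul1r -{1}xx.
by case: x c {xx} => [? ?] [? ?]; rewrite /cdot /ccross /=; ring.
Qed.

Lemma cdot_ccross_mul x c e : cdot x x = 1 ->
  cdot x c * cdot x e + ccross x c * ccross x e = cdot c e.
Proof.
move=> xx; rewrite -[RHS]mul1r -{1}xx.
by case: x c e {xx} => [? ?] [? ?] [? ?]; rewrite /cdot /ccross /=; ring.
Qed.

(* Two centres on the same side of the diameter through [x] cannot both be
   almost aligned with [x] unless their circles cross at an acute angle. *)
Lemma S1_far_center_pair x c e d : S1 x -> 0 < d -> 16 * d <= 1 ->
  16 * d <= cdot c c - 1 -> 16 * d <= cdot e e - 1 -> cdot c e <= 1 ->
  0 <= ccross x c * ccross x e -> cdot x c <= 1 - d \/ cdot x e <= 1 - d.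
Proof.
move=> /S1_cdot xx d_gt0 d_le c_ge e_ge ce_le1 same_side.
apply: (near_one_pair d_gt0 d_le c_ge e_ge _ _ _ same_side).
- by rewrite cdot_ccross_sqr //; ring.
- by rewrite cdot_ccross_sqr //; ring.
- by rewrite cdot_ccross_mul.
Qed.

Lemma S1_far_center (c : 'I_3 -> R[i]) x d : S1 x -> 0 < d -> 16 * d <= 1 ->
  (forall i, 16 * d <= cdot (c i) (c i) - 1) ->
  (forall i j, i != j -> cdot (c i) (c j) <= 1) ->
  exists i, cdot x (c i) <= 1 - d.
Proof.
move=> Sx d_gt0 d_le c_ge c_le1.
have far i j : i != j -> 0 <= ccross x (c i) * ccross x (c j) ->
    exists l : 'I_3, cdot x (c l) <= 1 - d.
  move=> ij /(S1_far_center_pair Sx d_gt0 d_le (c_ge i) (c_ge j) (c_le1 i j ij)).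
  by case=> ?; [exists i | exists j].
by case: (two_of_three_same_sign (ccross x (c 0)) (ccross x (c 1)) (ccross x (c 2)));
  apply: far.
Qed.

Lemma exists_hline_ray u : 1 < cdot u u -> exists2 t, 0 < t &
  forall c, 1 <= cmod c -> cdot u c = cdot u u -> hline c (t%:C%C * u).
Proof.
move=> u_gt1; set N := cdot u u in u_gt1 *.
have N_gt0 : 0 < N by lra.
have iN : N^-1 < 1 by rewrite invf_lt1.
have iN_gt0 : 0 < N^-1 by rewrite invr_gt0.
set s := Num.sqrt (1 - N^-1).
have s2 : s ^+ 2 = 1 - N^-1 by rewrite sqr_sqrtr // subr_ge0 ltW.
have s_gt0 : 0 < s by rewrite sqrtr_gt0 subr_gt0.
have s_lt1 : s < 1 by rewrite -(ltr_pXn2r (_ : (0 < 2)%N)) ?nnegrE ?ltW // s2 expr1n; lra.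
have NiN : N * N^-1 = 1 by rewrite mulfV ?gt_eqF.
(* [1 - s] is the smaller root of [N t^2 - 2 N t + 1 = 0]. *)
exists (1 - s); first lra.
move=> c c1 uc; apply/hlineP => //.
rewrite /power !cdot_scalel cdot_scaler -/N uc.
have on_circle : (1 - s) * ((1 - s) * N) - 2 * ((1 - s) * N) + 1 = 0.
  have -> : (1 - s) * ((1 - s) * N) - 2 * ((1 - s) * N) + 1 = N * (s ^+ 2 - 1) + 1 by ring.
  by rewrite s2; lra.
split=> //.
have ss_gt0 : 0 < s - s ^+ 2 by rewrite expr2 -{1}[s]mulr1 -mulrBr mulr_gt0 // subr_gt0.
have sN : (1 - s) * N = 1 - (s - s ^+ 2) * N by rewrite s2; lra.
have : 0 < (s - s ^+ 2) * N by rewrite mulr_gt0.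
lra.
Qed.

Lemma cdot_le_sqr_of_outside c c' : 1 < cmod c ->
  (forall z, hline c z -> 0 <= power c' z) -> cdot c c' <= cdot c c.
Proof.
move=> c1 out; rewrite leNgt; apply/negP => cc'_gt.
have cc_gt1 : 1 < cdot c c by rewrite -cmod_sqr exprn_egt1.
have [t t_gt0 /(_ c (ltW c1) erefl) Lz] := exists_hline_ray cc_gt1.
have [_ pz0] := (hlineP _ (ltW c1)).1 Lz.
have := out _ Lz; rewrite (power_sub c) pz0 add0r.
rewrite !cdot_scalel -mulrBr.
by rewrite pmulr_rge0 // pmulr_rge0 // subr_ge0 leNgt cc'_gt.
Qed.

(* The foot [u] of the radical axis on the segment [c c']: it has the same
   power [1 - |u|^2] with respect to both circles. *)
Lemma exists_radical_foot c c' : cdot c c' <= cdot c c -> cdot c c' <= cdot c' c' ->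
  exists u, [/\ cdot u c = cdot u u, cdot u c' = cdot u u & cdot c c' <= cdot u u].
Proof.
move=> le_c le_c'.
set w := c' - c; set W := cdot w w.
have cw : cdot c w = cdot c c' - cdot c c by rewrite cdotBr.
have [W0|W_neq0] := eqVneq W 0.
  have w0 : w = 0.
    by apply: contra_eq W0 => /cmod_gt0 w_gt0; rewrite /W -cmod_sqr gt_eqF ?exprn_gt0.
  have <- : c = c' by apply/esym/eqP; rewrite -subr_eq0 -/w w0.
  by exists c; split.
have W_gt0 : 0 < W by rewrite lt_def W_neq0 cdot_ge0.
set l := (cdot c c - cdot c c') / W.
have lW : l * W = cdot c c - cdot c c' by rewrite /l mulfVK.
have l_ge0 : 0 <= l by rewrite divr_ge0 ?subr_ge0 // ltW.
have l_le1 : l <= 1.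
  have WE : W = cdot c c - 2 * cdot c c' + cdot c' c' by rewrite /W -cmod_sqr cmodB_sqr [cdot c' c]cdotC; ring.
  by rewrite ler_pdivrMr // mul1r WE; lra.
have c'E : c' = c + w by rewrite addrC subrK.
set u := c + l%:C%C * w.
have uw : cdot u w = 0 by rewrite cdotC /u cdotDr cdot_scaler -/W lW cdotC cw; ring.
have uu : cdot u c = cdot u u by rewrite [in RHS]/u cdotDr -/u cdot_scaler uw mulr0 addr0.
exists u; split=> //; first by rewrite c'E cdotDr uw addr0.
rewrite -uu [cdot u c]cdotC /u cdotDr cdot_scaler cw -subr_ge0.
have -> : cdot c c + l * (cdot c c' - cdot c c) - cdot c c'
  = (1 - l) * (cdot c c - cdot c c') by ring.
by rewrite mulr_ge0 // subr_ge0.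
Qed.

Lemma cdot_le1_of_separated c c' : 1 < cmod c -> 1 < cmod c' ->
  hline c `&` hline c' = set0 ->
  (forall z, hline c z -> 0 <= power c' z) -> (forall z, hline c' z -> 0 <= power c z) ->
  cdot c c' <= 1.
Proof.
move=> c1 c1' disj out out'.
have le_c := cdot_le_sqr_of_outside c1 out.
have le_c' : cdot c c' <= cdot c' c' by rewrite cdotC cdot_le_sqr_of_outside.
have [u [uc uc' cc'_le]] := exists_radical_foot le_c le_c'.
apply: le_trans cc'_le _; rewrite leNgt; apply/negP => u_gt1.
have [t _ Lu] := exists_hline_ray u_gt1.
suff : (hline c `&` hline c') (t%:C%C * u) by rewrite disj.
by split; apply: Lu; rewrite ?ltW.
Qed.

Lemma ofR2_toR2 z : ofR2 (toR2 z) = z.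
Proof. by case: z. Qed.

Lemma continuous_power c : continuous (fun q : R * R => power c (ofR2 q)).
Proof.
move=> q; rewrite /power /cdot /ofR2 /=.
apply: cvgD; last exact: cvg_cst.
apply: cvgB.
  by apply: cvgD; apply: cvgM; [exact: cvg_fst|exact: cvg_fst|exact: cvg_snd|exact: cvg_snd].
apply: cvgM; first exact: cvg_cst.
by apply: cvgD; apply: cvgM; [exact: cvg_fst|exact: cvg_cst|exact: cvg_snd|exact: cvg_cst].
Qed.

(* A connected set avoiding the line [L_c] inside the disk cannot change the
   sign of the power with respect to [c]. *)
Lemma closure_component_power_ge0 (A : set R[i]) c z0 : 1 <= cmod c ->
  A `<=` disk (R:=R) `\` hline c -> 0 < power c z0 ->
  closure (connected_component (inR2 A) (toR2 z0)) `<=` [set q | 0 <= power c (ofR2 q)].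
Proof.
move=> c1 A_sub z0_pos.
set G := fun q : R * R => power c (ofR2 q).
have G_closed : closed [set q | 0 <= G q].
  have -> : [set q | 0 <= G q] = G @^-1` [set r | 0 <= r] by [].
  by apply: (continuous_closedP G).1; [exact: continuous_power | exact: closed_ge].
suff comp_sub : connected_component (inR2 A) (toR2 z0) `<=` [set q | 0 <= G q].
  by move=> q /(closureS comp_sub); rewrite -(closure_id _).1.
move=> y [B [Bz0 BA B_conn] By] /=; rewrite leNgt; apply/negP => Gy_lt0.
have GB_itv : is_interval (G @` B).
  apply/connected_intervalP/connected_continuous_connected => //.
  by apply: continuous_subspaceT; exact: continuous_power.
have [q Bq Gq0] : (G @` B) 0.
  apply: (GB_itv (G y) (G (toR2 z0))); [by exists y | by exists (toR2 z0) |].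
  by apply/andP; split; apply: ltW; rewrite // /G ofR2_toR2.
have [q_disk q_notL] := A_sub _ (BA q Bq).
by apply: q_notL; apply/hlineP => //; rewrite -cmod_lt1.
Qed.

Lemma vangle_ge_pihalf u v : pi / 2 <= vangle u v -> cdot u v <= 0.
Proof.
rewrite /vangle => obtuse; rewrite leNgt; apply/negP => uv_gt0.
have uv_gt0' : 0 < cmod u * cmod v := lt_le_trans uv_gt0 (cdot_le_cmod u v).
set y := cdot u v / _ in obtuse.
have y_gt0 : 0 < y by rewrite divr_gt0.
have y_le1 : y <= 1 by rewrite ler_pdivrMr // mul1r cdot_le_cmod.
have y_itv : -1 <= y <= 1 by apply/andP; split; lra.
have pi_gt0 : 0 < pi :> R := pi_gt0 R.
move: obtuse; rewrite leNgt => /negP; apply.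
have [acos_ge0 acos_le] := andP (proj1 (acos_def y_itv)).
rewrite -ltr_cos ?in_itv /= ?acos_ge0 ?acos_le ?divr_ge0 ?ler_pdivrMr ?ltW //; last lra.
by rewrite acosK ?in_itv //= cos_pihalf.
Qed.

Lemma side0 c : 1 < cmod c -> side c 0 = 1.
Proof. by move=> c1; rewrite /side ifT // rad_lt_cmodB ?ltW // power0 ltr01. Qed.

Lemma cdot_hlineI c c' p : 1 <= cmod c -> 1 <= cmod c' -> hline c p -> hline c' p ->
  cdot (p - c) (p - c') = cdot c c' - 1.
Proof.
move=> c1 c1' /(hlineP _ c1) [_ pc0] /(hlineP _ c1') [_ pc'0].
have -> : cdot (p - c) (p - c') = (power c p + power c' p) / 2 + cdot c c' - 1.
  by rewrite /power; case: p c c' {pc0 pc'0 c1 c1'} => [? ?] [? ?] [? ?]; rewrite /cdot /=; field.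
by rewrite pc0 pc'0 addr0 mul0r add0r.
Qed.

Lemma pair_config_cdot_le1 c c' : 1 < cmod c -> 1 < cmod c' ->
  pair_config c c' 0 -> cdot c c' <= 1.
Proof.
move=> c1 c1' [[disj [Lc_front Lc'_front]] | [p [Lp [Lp' [m [m_ge2 angle]]]]]].
  set A := disk (R:=R) `\` (hline c `|` hline c') in Lc_front Lc'_front.
  have outside e e' : 1 < cmod e' -> A `<=` disk (R:=R) `\` hline e' ->
      inR2 (hline e) `<=` frontier (connected_component (inR2 A) (toR2 0)) ->
      forall z, hline e z -> 0 <= power e' z.
    move=> e1' A_sub front z Lz; rewrite -(ofR2_toR2 z).
    apply: (closure_component_power_ge0 (z0 := 0) (ltW e1') A_sub); first by rewrite power0 ltr01.
    by case: (front (toR2 z)) => //; rewrite /inR2 /= ofR2_toR2.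
  apply: cdot_le1_of_separated => //; apply: outside => //.
    by move=> z [Dz notL]; split=> // Lz; apply: notL; right.
  by move=> z [Dz notL]; split=> // Lz; apply: notL; left.
rewrite -subr_le0 -(cdot_hlineI (ltW c1) (ltW c1') Lp Lp'); apply: vangle_ge_pihalf.
move: angle; rewrite /sector_angle !side0 // -[(1 : R)%:C%C]/(1 : R[i]) !mul1r.
have pi_m : pi / m%:R <= pi / 2 :> R.
  by rewrite ler_pM2l ?pi_gt0 // lef_pV2 ?posrE ?ltr0n ?ler_nat // (leq_trans _ m_ge2).
lra.
Qed.

Lemma uniform_sqr_contraction (c : 'I_3 -> R[i]) :
  (forall i, 1 < cmod (c i)) -> (forall i j, i != j -> cdot (c i) (c j) <= 1) ->
  exists2 q, q < 1 & forall x y, S1 x ->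
    exists i, cmod (tau (c i) x - tau (c i) y) ^+ 2 <= q * cmod (x - y) ^+ 2.
Proof.
move=> c1 c_le1.
pose s i := cdot (c i) (c i) - 1.
have s_gt0 i : 0 < s i by rewrite subr_gt0 -cmod_sqr exprn_egt1.
pose d := (\big[Num.min/1]_i s i) / 16.
have d_gt0 : 0 < d by rewrite divr_gt0 // lt_bigmin.
have d_le1 : 16 * d <= 1 by rewrite mulrC divfK ?bigmin_le_id.
have d_le i : 16 * d <= s i by rewrite mulrC divfK ?bigmin_le.
exists (\big[Num.max/0]_i (s i / (s i + 2 * d))).
  apply: bigmax_lt => // i _; rewrite ltr_pdivrMr ?mul1r; have := s_gt0 i; lra.
move=> x y Sx; have [i xi] := S1_far_center Sx d_gt0 d_le1 d_le c_le1.
exists i; apply: (le_trans (tau_contract_S1 y (c1 i) Sx d_gt0 xi)).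
by rewrite ler_wpM2r ?sqr_ge0 // (le_bigmax _ _ i).
Qed.

End PlaneGeometry.

Theorem mainTheorem6 (R : realType) (c : 'I_3 -> R[i]) :
  (forall i, 1 < cmod (c i)) ->
  config c 0 ->
  exists K : R, K < 1 /\
    forall x y : R[i], S1 x -> S1 y -> x != y ->
      exists i : 'I_3, cmod (tau (c i) x - tau (c i) y) < K * cmod (x - y).
Proof.
move=> c1 cfg.
have [q q_lt1 contract] := uniform_sqr_contraction c1
  (fun i j ij => pair_config_cdot_le1 (c1 i) (c1 j) (cfg i j ij)).
exists ((1 + q) / 2); split=> [|x y Sx _ xy]; first lra.
have [i tau_le] := contract x y Sx; exists i.
by apply: sqr_contraction_lt tau_le; rewrite ?cmod_ge0 ?cmod_gt0 ?subr_eq0.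
Qed.
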